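(* Let $C=(Q,\Sigma,\Psi)$ be a HMM with an independent functional decomposition $\Psi=\sum_{k=1}^d f_kP_k$ in which every $P_k$ is non-negative. Let $\overline\Sigma=\{a_1,\dots,a_d\}$ be a set of fresh observations and let $F=(Q,\overline\Sigma,M)$ with $M(a_k)=P_k$ for $k\in[d]$. Then $F$ is a finite-observation HMM, and for any initial distributions $\pi_1,\pi_2$, $\pi_1\equiv_C\pi_2$ if and only if $\pi_1\equiv_F\pi_2$.
   Context: Let $(\Sigma,\mathscr{G},\lambda)$ be a measure space where $\Sigma$ is a topological space and every open subset belongs to $\mathscr{G}$ and has positive measure. A HMM is $(Q,\Sigma,\Psi)$ with $Q$ finite and $\Psi:\Sigma\to[0,\infty)^{|Q|\times|Q|}$ piecewise continuous (continuous on an open set $C'$ such that every point outside $C'$ is a limit of points $x_n\in C'$ with $\Psi(x_n)$ converging to its value) with entrywise integral $\int_\Sigma\Psi\,d\lambda$ stochastic. A finite-observation HMM has finite $\Sigma$ with counting measure, so the condition is that $\sum_{a}\Psi(a)$ is stochastic. With $\Psi(x_1\cdots x_n)=\Psi(x_1)\cdots\Psi(x_n)$, an initial distribution $\pi$ induces the unique probability measure $\mathbb{P}_\pi$ on $\Sigma^\omega$ with $\mathbb{P}_\pi(A\Sigma^\omega)=\pi\left(\int_A\Psi\,d\lambda^n\right)\mathbbm{1}^T$ for cylinder sets $A=A_1\times\dots\times A_n$; $\pi_1\equiv\pi_2$ means $\mathbb{P}_{\pi_1}=\mathbb{P}_{\pi_2}$. An independent functional decomposition consists of linearly independent functions $f_k:\Sigma\to[0,\infty)$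 with $\int_\Sigma f_k\,d\lambda=1$ and matrices $P_k\in\mathbb{R}^{|Q|\times|Q|}$ such that $\Psi(x)=\sum_{k=1}^d f_k(x)P_k$ for all $x$. *)

From HB Require Import structures.
From mathcomp Require Import all_boot all_order all_algebra.
From mathcomp Require Import all_classical all_reals all_analysis.

Set Implicit Arguments.
Unset Strict Implicit.
Unset Printing Implicit Defensive.

Import Order.TTheory GRing.Theory Num.Theory.
Import numFieldNormedType.Exports.
Local Open Scope classical_set_scope.
Local Open Scope ring_scope.

#[short(type="topMeasurableType")]
HB.structure Definition TopMeasurable (d : measure_display) :=
  {T of Measurable d T & Topological T}.

Section HMMDefs.
Context {R : realType} {d : measure_display} {T : topMeasurableType d}.

Definition open_positive (mu : {measure set T -> \bar R}) : Prop :=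
  forall U : set T, open U -> measurable U /\ (U !=set0 -> (0 < mu U)%E).

Definition nonneg_mx {m n : nat} (P : 'M[R]_(m, n)) : Prop :=
  forall i j, 0 <= P i j.

Definition stochastic {n : nat} (P : 'M[R]_n) : Prop :=
  nonneg_mx P /\ forall i, \sum_(j < n) P i j = 1.

Definition init_distr {n : nat} (pi : 'rV[R]_n) : Prop :=
  (forall j, 0 <= pi 0 j) /\ \sum_(j < n) pi 0 j = 1.

Definition piecewise_continuous {n : nat} (Psi : T -> 'M[R]_n) : Prop :=
  exists C' : set T, open C' /\
    (forall x, C' x -> forall i j, {for x, continuous ((fun y => Psi y i j) : T -> R)}) /\
    (forall x, ~ C' x -> exists u : nat -> T,
        (forall k, C' (u k)) /\ u @ \oo --> x /\
        (forall i j, ((fun k => Psi (u k) i j) : nat -> R) @ \oo --> (Psi x i j : R))).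

Definition int_mx {n : nat} (mu : {measure set T -> \bar R})
    (Psi : T -> 'M[R]_n) (A : set T) : 'M[R]_n :=
  \matrix_(i, j) fine (\int[mu]_(x in A) (Psi x i j)%:E)%E.

Definition HMM {n : nat} (mu : {measure set T -> \bar R})
    (Psi : T -> 'M[R]_n) : Prop :=
  (forall x, nonneg_mx (Psi x)) /\
  (forall i j, measurable_fun setT (fun x => Psi x i j)) /\
  piecewise_continuous Psi /\
  (forall i j, (\int[mu]_x (Psi x i j)%:E < +oo)%E) /\
  stochastic (int_mx mu Psi setT).

(* Probability of the cylinder set A_1 x ... x A_m x Sigma^omega under P_pi:
   pi (int_{A_1 x ... x A_m} Psi d lambda^m) 1^T, where the entrywise integral
   of Psi(x_1)...Psi(x_m) over the product set factors as the product of the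
   entrywise integrals over the A_i. *)
Definition cyl_prob {n : nat} (mu : {measure set T -> \bar R})
    (Psi : T -> 'M[R]_n) (pi : 'rV[R]_n) (m : nat) (A : 'I_m -> set T) : R :=
  (pi *m (\prod_(i < m) int_mx mu Psi (A i)) *m (const_mx 1 : 'cV[R]_n)) 0 0.

(* pi1 == pi2 in the HMM: the induced measures on Sigma^omega coincide,
   i.e. (by uniqueness of the extension) they agree on all measurable
   cylinder sets. *)
Definition hmm_equiv {n : nat} (mu : {measure set T -> \bar R})
    (Psi : T -> 'M[R]_n) (pi1 pi2 : 'rV[R]_n) : Prop :=
  forall (m : nat) (A : 'I_m -> set T), (forall i, measurable (A i)) ->
    cyl_prob mu Psi pi1 A = cyl_prob mu Psi pi2 A.

Definition lin_indep_fun {dd : nat} (f : 'I_dd -> T -> R) : Prop :=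
  forall c : 'I_dd -> R, (forall x, \sum_(k < dd) c k * f k x = 0) ->
    forall k, c k = 0.

Definition indep_fun_decomp {n dd : nat} (mu : {measure set T -> \bar R})
    (Psi : T -> 'M[R]_n) (f : 'I_dd -> T -> R) (P : 'I_dd -> 'M[R]_n) : Prop :=
  lin_indep_fun f /\
  (forall k x, 0 <= f k x) /\
  (forall k, measurable_fun setT (f k)) /\
  (forall k, (\int[mu]_x (f k x)%:E = 1)%E) /\
  (forall x, Psi x = \sum_(k < dd) f k x *: P k).

End HMMDefs.

Section FinHMMDefs.
Context {R : realType}.

Definition fin_HMM {n dd : nat} (M : 'I_dd -> 'M[R]_n) : Prop :=
  (forall a, nonneg_mx (M a)) /\ stochastic (\sum_(a < dd) M a).

(* Cylinder probability for a finite-observation HMM: integrals w.r.t. the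
   counting measure are finite sums. *)
Definition fin_cyl_prob {n dd : nat} (M : 'I_dd -> 'M[R]_n) (pi : 'rV[R]_n)
    (m : nat) (A : 'I_m -> {set 'I_dd}) : R :=
  (pi *m (\prod_(i < m) \sum_(a in A i) M a) *m (const_mx 1 : 'cV[R]_n)) 0 0.

Definition fin_hmm_equiv {n dd : nat} (M : 'I_dd -> 'M[R]_n)
    (pi1 pi2 : 'rV[R]_n) : Prop :=
  forall (m : nat) (A : 'I_m -> {set 'I_dd}),
    fin_cyl_prob M pi1 A = fin_cyl_prob M pi2 A.

End FinHMMDefs.

From HB Require Import structures.
From mathcomp Require Import all_boot all_order all_algebra.
From mathcomp Require Import all_classical all_reals all_analysis.
From mathcomp Require Import measurable_realfun.

(* For a row a and a column b, the scalar function x |-> a Psi(x) b equals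
   sum_k (a P_k b) f_k; it is piecewise continuous and its integral over A is
   a Psi(A) b.  If these integrals all vanish, the function vanishes wherever
   it is continuous (an open set where it is positive has positive measure),
   hence everywhere, and linear independence of the f_k kills every a P_k b.
   Taking a = (pi1 - pi2) P_w and b = Psi(A_1) ... Psi(A_m) 1, induction on
   the word w shows that pi1 == pi2 in C forces (pi1 - pi2) P_w 1 = 0 for all
   words w; equivalence in F forces it too, through singleton observation
   sets.  Conversely, the rows annihilated by all words form a space stable
   under right multiplication by the span of the P_k, and this span contains
   every Psi(A) and every sum of the P_a over a set of observations. *)

Set Implicit Arguments.
Unset Strict Implicit.
Unset Printing Implicit Defensive.

Import Order.TTheory GRing.Theory Num.Theory.
Import numFieldNormedType.Exports.
Local Open Scope classical_set_scope.
Local Open Scope ring_scope.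

Section MatrixForms.
Variables (R : comPzRingType) (n : nat).
Implicit Types (a u v : 'rV[R]_n) (b : 'cV[R]_n) (M : 'M[R]_n).

Lemma mulmx_entry_sum a M b :
  (a *m M *m b) 0 0 = \sum_i \sum_j a 0 i * M i j * b j 0.
Proof.
rewrite mxE; under eq_bigr do rewrite mxE big_distrl.
by rewrite exchange_big.
Qed.

Lemma mulmx_sumZ_entry a b (I : Type) (r : seq I) (c : I -> R)
    (F : I -> 'M[R]_n) :
  (a *m (\sum_(i <- r) c i *: F i) *m b) 0 0
  = \sum_(i <- r) c i * (a *m F i *m b) 0 0.
Proof.
rewrite mulmx_sumr mulmx_suml summxE; apply: eq_bigr => i _.
by rewrite -scalemxAr -scalemxAl mxE.
Qed.

Lemma mulmx_entry_eqE u v M b :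
  (u *m M *m b) 0 0 = (v *m M *m b) 0 0 <-> ((u - v) *m M *m b) 0 0 = 0.
Proof.
rewrite !mulmxBl; set x := u *m M *m b; set y := v *m M *m b.
rewrite !mxE; split=> [->|/eqP]; first exact: subrr.
by rewrite subr_eq0 => /eqP.
Qed.

End MatrixForms.

Section Words.
Variables (R : comPzRingType) (n dd : nat) (P : 'I_dd -> 'M[R]_n).

Definition words_null (v : 'rV[R]_n) : Prop :=
  forall s : seq 'I_dd,
    (v *m \prod_(k <- s) P k *m (const_mx 1 : 'cV[R]_n)) 0 0 = 0.

Lemma words_null_mulmx_comb v (c : 'I_dd -> R) :
  words_null v -> words_null (v *m \sum_(k < dd) c k *: P k).
Proof.
move=> v0 s; rewrite -mulmxA mulmx_sumZ_entry big1 // => k _.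
have := v0 (k :: s); rewrite big_cons -mulmxE !mulmxA => ->.
exact: mulr0.
Qed.

Lemma words_null_mulmx_prod v m (c : 'I_m -> 'I_dd -> R) :
  words_null v -> words_null (v *m \prod_(i < m) \sum_(k < dd) c i k *: P k).
Proof.
elim: m c v => [|m IH] c v v0; first by rewrite big_ord0 mulmx1.
rewrite big_ord_recl -mulmxE mulmxA; apply: IH.
exact: words_null_mulmx_comb.
Qed.

Lemma words_null_prod_comb v m (c : 'I_m -> 'I_dd -> R) :
  words_null v ->
  (v *m (\prod_(i < m) \sum_(k < dd) c i k *: P k) *m (const_mx 1 : 'cV[R]_n))
    0 0 = 0.
Proof.
by move=> /(words_null_mulmx_prod c)/(_ [::]); rewrite big_nil mulmx1.
Qed.

End Words.

Lemma words_null_fin_hmm_equiv (R : realType) (n dd : nat)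
    (P : 'I_dd -> 'M[R]_n) (pi1 pi2 : 'rV[R]_n) :
  words_null P (pi1 - pi2) <-> fin_hmm_equiv P pi1 pi2.
Proof.
split=> [null m B | eqv s].
  apply/mulmx_entry_eqE.
  have -> : \prod_(i < m) \sum_(a in B i) P a
          = \prod_(i < m) \sum_(k < dd) (k \in B i)%:R *: P k.
    apply: eq_bigr => i _; rewrite big_mkcond; apply: eq_bigr => k _.
    by case: (k \in B i); rewrite ?scale1r ?scale0r.
  exact: words_null_prod_comb.
have /mulmx_entry_eqE := eqv (size s) (fun i => [set tnth (in_tuple s) i]%SET).
rewrite /fin_cyl_prob (big_tuple _ _ (in_tuple s)).
by under eq_bigr do rewrite big_set1.
Qed.

Lemma cvg_mulmx_entry (R : realType) (n : nat) (U : Type) (F : set_system U)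
    {FF : Filter F} (M : U -> 'M[R]_n) (L : 'M[R]_n)
    (a : 'rV[R]_n) (b : 'cV[R]_n) :
  (forall i j, (fun u => M u i j) @ F --> L i j) ->
  (fun u => (a *m M u *m b) 0 0) @ F --> (a *m L *m b) 0 0.
Proof.
move=> ML; rewrite mulmx_entry_sum; under eq_fun do rewrite mulmx_entry_sum.
apply: cvg_big => [|i _]; first exact: add_continuous.
apply: cvg_big => [|j _]; first exact: add_continuous.
by apply: cvgMr_tmp; apply: cvgMl_tmp.
Qed.

Section PositiveOpenSets.
Context {R : realType} {d : measure_display} {T : topMeasurableType d}.
Variable mu : {measure set T -> \bar R}.
Hypothesis mu_open : open_positive mu.

Lemma continuous_le0_of_integral_le0 (h : T -> R) (U0 : set T) :
  open U0 -> measurable_fun setT h ->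
  (forall x, U0 x -> {for x, continuous h}) ->
  (forall U, open U -> (\int[mu]_(x in U) (h x)%:E <= 0)%E) ->
  forall x, U0 x -> h x <= 0.
Proof.
move=> oU0 mh hc hU x U0x; rewrite leNgt; apply/negP => hx_gt0.
pose e := h x / 2.
have e_gt0 : 0 < e by rewrite divr_gt0.
have e_lt : e < h x by rewrite ltr_pdivrMr // ltr_pMr // ltr1n.
pose U := U0 `&` [set y | e < h y].
have oU : open U.
  rewrite openE => y [U0y ey]; have := oU0; rewrite openE => /(_ y U0y) U0_y.
  by apply: filterI U0_y _; apply: cvgr_gt (hc y U0y) _ ey.
have [mU /(_ (ex_intro _ x (conj U0x e_lt))) muU_gt0] := mu_open oU.
have : (e%:E * mu U <= \int[mu]_(y in U) (h y)%:E)%E.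
  rewrite -integral_cst //; apply: ge0_le_integral => //.
  - by move=> y _; rewrite lee_fin ltW.
  - exact/measurable_EFinP/(measurable_funS measurableT).
  - by move=> y [_ /ltW].
move/le_trans/(_ (hU U oU)); apply/negP; rewrite -ltNge.
by rewrite mule_gt0 // lte_fin.
Qed.

End PositiveOpenSets.

Section FunctionalDecomposition.
Context {R : realType} {d : measure_display} {T : topMeasurableType d}.
Variables (mu : {measure set T -> \bar R}) (n dd : nat) (Psi : T -> 'M[R]_n)
  (f : 'I_dd -> T -> R) (P : 'I_dd -> 'M[R]_n).
Hypothesis f_ge0 : forall k x, 0 <= f k x.
Hypothesis f_meas : forall k, measurable_fun setT (f k).
Hypothesis f_int1 : forall k, (\int[mu]_x (f k x)%:E = 1)%E.
Hypothesis Psi_decomp : forall x, Psi x = \sum_(k < dd) f k x *: P k.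

Lemma integrable_decomp_fun k A :
  measurable A -> mu.-integrable A (EFin \o f k).
Proof.
move=> mA; apply: (integrableS measurableT) => //.
apply/integrableP; split; first exact/measurable_EFinP.
under eq_integral do rewrite /= ger0_norm//.
by rewrite f_int1 ltry.
Qed.

Lemma integral_decomp_comb A (c : 'I_dd -> R) : measurable A ->
  (\int[mu]_(x in A) (\sum_(k < dd) c k * f k x)%:E
   = (\sum_(k < dd) c k * fine (\int[mu]_(x in A) (f k x)%:E))%:E)%E.
Proof.
move=> mA; have fA k := integrable_decomp_fun k mA.
under eq_integral do rewrite -sumEFin.
rewrite (integral_sum mA); last first.
  move=> k; apply: (eq_integrable mA _ _ _ (integrableZl mA (c k) (fA k))).
  by move=> x _; rewrite EFinM.
rewrite -sumEFin; apply: eq_bigr => k _.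
under eq_integral do rewrite EFinM.
by rewrite (integralZl mA (fA k)) EFinM fineK // (integrable_fin_num mA (fA k)).
Qed.

Lemma int_mx_decomp A : measurable A ->
  int_mx mu Psi A = \sum_(k < dd) fine (\int[mu]_(x in A) (f k x)%:E) *: P k.
Proof.
move=> mA; apply/matrixP => i j; rewrite !mxE summxE.
under eq_integral do rewrite Psi_decomp summxE.
under eq_integral => x _ do under eq_bigr => k _ do rewrite mxE mulrC.
by rewrite integral_decomp_comb //=; apply: eq_bigr => k _; rewrite mxE mulrC.
Qed.

Lemma int_mx_setT : int_mx mu Psi setT = \sum_(k < dd) P k.
Proof.
by rewrite int_mx_decomp //; apply: eq_bigr => k _; rewrite f_int1 scale1r.
Qed.

Lemma Psi_entry_decomp (a : 'rV[R]_n) (b : 'cV[R]_n) x :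
  (a *m Psi x *m b) 0 0 = \sum_(k < dd) (a *m P k *m b) 0 0 * f k x.
Proof.
by rewrite Psi_decomp mulmx_sumZ_entry; apply: eq_bigr => k _; rewrite mulrC.
Qed.

Lemma measurable_Psi_entry (a : 'rV[R]_n) (b : 'cV[R]_n) :
  measurable_fun setT (fun x => (a *m Psi x *m b) 0 0).
Proof.
under eq_fun do rewrite Psi_entry_decomp.
by apply: measurable_sum => k; apply: measurable_funM.
Qed.

Lemma integral_Psi_entry (a : 'rV[R]_n) (b : 'cV[R]_n) A : measurable A ->
  (\int[mu]_(x in A) ((a *m Psi x *m b) 0 0)%:E
   = ((a *m int_mx mu Psi A *m b) 0 0)%:E)%E.
Proof.
move=> mA; under eq_integral do rewrite Psi_entry_decomp.
rewrite integral_decomp_comb // int_mx_decomp // mulmx_sumZ_entry.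
by congr EFin; apply: eq_bigr => k _; rewrite mulrC.
Qed.

Definition cylinders_null (v : 'rV[R]_n) : Prop :=
  forall m (A : 'I_m -> set T), (forall i, measurable (A i)) ->
    (v *m \prod_(i < m) int_mx mu Psi (A i) *m (const_mx 1 : 'cV[R]_n)) 0 0
    = 0.

Lemma hmm_equiv_cylinders_null (pi1 pi2 : 'rV[R]_n) :
  hmm_equiv mu Psi pi1 pi2 <-> cylinders_null (pi1 - pi2).
Proof. by split=> eqv m A mA; apply/mulmx_entry_eqE/eqv. Qed.

Hypothesis mu_open : open_positive mu.
Hypothesis Psi_pc : piecewise_continuous Psi.

Lemma Psi_entry_le0 (a : 'rV[R]_n) (b : 'cV[R]_n) :
  (forall A, measurable A -> (a *m int_mx mu Psi A *m b) 0 0 = 0) ->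
  forall x, (a *m Psi x *m b) 0 0 <= 0.
Proof.
move=> int0; have [C' [oC' [Psi_cont Psi_lim]]] := Psi_pc.
have le0_C' : forall x, C' x -> (a *m Psi x *m b) 0 0 <= 0.
  apply: (continuous_le0_of_integral_le0 mu_open oC').
  - exact: measurable_Psi_entry.
  - by move=> x /Psi_cont; apply: cvg_mulmx_entry.
  - by move=> U oU; have [mU _] := mu_open oU; rewrite integral_Psi_entry ?int0.
move=> x; have [/le0_C' //|nC'x] := pselect (C' x).
have [u [u_C' [_ Psi_u]]] := Psi_lim x nC'x.
apply: (closed_cvg _ (@closed_le _ 0) _ _
  (cvg_mulmx_entry (a := a) (b := b) Psi_u)).
by apply: nearW => k; apply: le0_C'.
Qed.

Lemma Psi_entry_eq0 (a : 'rV[R]_n) (b : 'cV[R]_n) :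
  (forall A, measurable A -> (a *m int_mx mu Psi A *m b) 0 0 = 0) ->
  forall x, (a *m Psi x *m b) 0 0 = 0.
Proof.
move=> int0 x; apply/eqP; rewrite eq_le Psi_entry_le0 //=.
have := @Psi_entry_le0 (- a) b _ x; rewrite !mulNmx mxE oppr_le0; apply.
by move=> A mA; rewrite !mulNmx mxE int0 // oppr0.
Qed.

Hypothesis f_indep : lin_indep_fun f.

Lemma P_entry_eq0 (a : 'rV[R]_n) (b : 'cV[R]_n) :
  (forall A, measurable A -> (a *m int_mx mu Psi A *m b) 0 0 = 0) ->
  forall k, (a *m P k *m b) 0 0 = 0.
Proof.
move=> int0; apply: (f_indep (c := fun k => (a *m P k *m b) 0 0)) => x.
by rewrite -Psi_entry_decomp Psi_entry_eq0.
Qed.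

Lemma cylinders_null_mulmx_P v k :
  cylinders_null v -> cylinders_null (v *m P k).
Proof.
move=> v0 m A mA; rewrite -(mulmxA (v *m P k)).
apply: P_entry_eq0 => A0 mA0.
pose A' (i : 'I_m.+1) := if unlift ord0 i is Some j then A j else A0.
have mA' i : measurable (A' i) by rewrite /A'; case: unlift.
have := v0 _ _ mA'; rewrite big_ord_recl /A' unlift_none.
under eq_bigr do rewrite liftK.
by rewrite -mulmxE !mulmxA.
Qed.

Lemma cylinders_null_words_null v : cylinders_null v -> words_null P v.
Proof.
move=> v0 s; elim: s v v0 => [|k s IH] v v0.
  by have := v0 0 (fun=> set0) (fun=> measurable0); rewrite big_ord0 big_nil.
by rewrite big_cons -mulmxE mulmxA; apply/IH/cylinders_null_mulmx_P.
Qed.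

Lemma words_null_cylinders_null v : words_null P v -> cylinders_null v.
Proof.
move=> v0 m A mA; rewrite (eq_bigr _ (fun i _ => int_mx_decomp (mA i))).
exact: words_null_prod_comb.
Qed.

Lemma hmm_equiv_words_null (pi1 pi2 : 'rV[R]_n) :
  hmm_equiv mu Psi pi1 pi2 <-> words_null P (pi1 - pi2).
Proof.
split=> [/hmm_equiv_cylinders_null/cylinders_null_words_null //|].
by move=> /words_null_cylinders_null/hmm_equiv_cylinders_null.
Qed.

End FunctionalDecomposition.

Theorem proposition19 (R : realType) (d : measure_display)
  (T : topMeasurableType d) (mu : {measure set T -> \bar R})
  (n dd : nat) (Psi : T -> 'M[R]_n)
  (f : 'I_dd -> T -> R) (P : 'I_dd -> 'M[R]_n) :
  open_positive mu ->
  HMM mu Psi ->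
  indep_fun_decomp mu Psi f P ->
  (forall k, nonneg_mx (P k)) ->
  fin_HMM P /\
  (forall pi1 pi2 : 'rV[R]_n, init_distr pi1 -> init_distr pi2 ->
     (hmm_equiv mu Psi pi1 pi2 <-> fin_hmm_equiv P pi1 pi2)).
Proof.
move=> mu_open [_ [_ [Psi_pc [_ int_stoch]]]]
  [f_indep [f_ge0 [f_meas [f_int1 Psi_decomp]]]] P_ge0.
split.
  by split=> //; rewrite -(int_mx_setT f_ge0 f_meas f_int1 Psi_decomp).
(* The equivalence holds for arbitrary rows, not only for distributions. *)
move=> pi1 pi2 _ _; apply: iff_trans (words_null_fin_hmm_equiv _ _ _).
exact: (hmm_equiv_words_null f_ge0 f_meas f_int1 Psi_decomp mu_open Psi_pc
  f_indep).
Qed.
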